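(* Let $G$ be a Lie group with multiplication $\mu(x,y)=xy$, division $\delta(x,y)=x^{-1}y$ (both maps $G\times G\to G$) and inversion $I\colon G\to G$, $I(x)=x^{-1}$. Then $\mathrm{D}(\mu,\delta)=\mathrm{D}(\mathrm{id}_G,I)$.
   Context: For continuous maps $f,g\colon X\to Y$, the homotopic distance $\mathrm{D}(f,g)$ is the least integer $n\geq 0$ such that there is an open cover $\{U_0,\dots,U_n\}$ of $X$ with $f|_{U_j}\simeq g|_{U_j}$ for all $j$; if no such cover exists, $\mathrm{D}(f,g)=\infty$. *)

From HB Require Import structures.
From mathcomp Require Import all_boot all_order all_algebra.
From mathcomp Require Import all_classical all_reals all_analysis.
Set Implicit Arguments. Unset Strict Implicit. Unset Printing Implicit Defensive.
Import Order.TTheory GRing.Theory Num.Theory.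
Import numFieldNormedType.Exports.
Local Open Scope classical_set_scope.
Local Open Scope ring_scope.

Definition topological_group (G : topologicalType)
    (mul : G -> G -> G) (inv : G -> G) (one : G) : Prop :=
  [/\ (forall x y z, mul x (mul y z) = mul (mul x y) z),
      (forall x, mul one x = x /\ mul x one = x),
      (forall x, mul (inv x) x = one /\ mul x (inv x) = one),
      continuous (fun p : G * G => mul p.1 p.2)
    & continuous inv].

Definition locally_euclidean (R : realType) (n : nat) (G : topologicalType) : Prop :=
  forall x : G, exists (U : set G) (phi : G -> 'rV[R]_n) (psi : 'rV[R]_n -> G),
    [/\ open U /\ U x, open (phi @` U),
        {within U, continuous phi},
        {within phi @` U, continuous psi}
      & forall y, U y -> psi (phi y) = y].

Definition homotopic_on (R : realType) (X Y : topologicalType)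
    (U : set X) (f g : X -> Y) : Prop :=
  exists H : X * R -> Y,
    [/\ {within U `*` `[0%R, 1%R], continuous H},
        (forall x, U x -> H (x, 0%R) = f x)
      & (forall x, U x -> H (x, 1%R) = g x)].

Definition hdist_le (R : realType) (X Y : topologicalType)
    (f g : X -> Y) (n : nat) : Prop :=
  exists U : nat -> set X,
    [/\ (forall j, (j <= n)%N -> open (U j)),
        \bigcup_(j in [set j | (j <= n)%N]) U j = setT
      & forall j, (j <= n)%N -> homotopic_on R (U j) f g].

(** Homotopic distance D(f,g): [Some n] with n least such that
    [hdist_le f g n], or [None] (= infinity) if no such cover exists. *)
Definition hdist (R : realType) (X Y : topologicalType) (f g : X -> Y)
    : option nat :=
  match pselect (exists n, hdist_le R f g n) with
  | left h => Some (ex_minn (P := fun n => `[< hdist_le R f g n >])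
                      (let: ex_intro n hn := h in ex_intro _ n (asboolT hn)))
  | right _ => None
  end.

(* A homotopy H from id to I on an open set U of G gives the homotopy
   ((x, y), t) |-> H(x, t) y from mu to delta on U x G. Conversely, restricting
   a homotopy from mu to delta on an open V of G x G to the slice y = 1 gives a
   homotopy from id to I on the open set {x | (x, 1) in V}. Hence an open cover
   witnessing D(id, I) <= k yields one witnessing D(mu, delta) <= k and vice
   versa. *)
From HB Require Import structures.
From mathcomp Require Import all_boot all_order all_algebra.
From mathcomp Require Import all_classical all_reals all_analysis.
Set Implicit Arguments. Unset Strict Implicit. Unset Printing Implicit Defensive.
Local Open Scope classical_set_scope.

Section ContinuousWithin.
Variables X Y Z : topologicalType.

Lemma continuous_fst : continuous (@fst X Y).
Proof. by move=> p; exact: cvg_fst. Qed.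

Lemma continuous_snd : continuous (@snd X Y).
Proof. by move=> p; exact: cvg_snd. Qed.

Lemma comp_continuous (f : X -> Y) (g : Y -> Z) :
  continuous f -> continuous g -> continuous (g \o f).
Proof. by move=> cf cg x; exact: continuous_comp (cf x) (cg (f x)). Qed.

Lemma continuous_pair (f : X -> Y) (g : X -> Z) :
  continuous f -> continuous g -> continuous (fun x => (f x, g x)).
Proof. by move=> cf cg x; exact: cvg_pair (cf x) (cg x). Qed.

Lemma continuous_within_pair (A : set X) (f : X -> Y) (g : X -> Z) :
  {within A, continuous f} -> {within A, continuous g} ->
  {within A, continuous (fun x => (f x, g x))}.
Proof.
move=> /subspace_continuousP cf /subspace_continuousP cg.
by apply/subspace_continuousP => x Ax; exact: cvg_pair (cf _ Ax) (cg _ Ax).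
Qed.

Lemma continuous_within_postcomp (A : set X) (f : X -> Y) (g : Y -> Z) :
  {within A, continuous f} -> continuous g -> {within A, continuous (g \o f)}.
Proof.
move=> /subspace_continuousP cf cg; apply/subspace_continuousP => x Ax.
exact: cvg_comp (cf _ Ax) (cg (f x)).
Qed.

Lemma continuous_within_precomp (A : set X) (B : set Y) (f : X -> Y) (g : Y -> Z) :
  continuous f -> {homo f : x / A x >-> B x} -> {within B, continuous g} ->
  {within A, continuous (fun x => g (f x))}.
Proof.
move=> cf fAB /subspace_continuousP cg; apply/subspace_continuousP => x Ax.
apply: (cvg_comp f g _ (cg _ (fAB _ Ax))) => W /= fW; rewrite /within /= in fW *.
have := cf x _ fW; rewrite /= nbhs_simpl /=.
by apply: filterS => z Wz Az; apply: Wz; exact: fAB.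
Qed.

End ContinuousWithin.

Section Homotopy.
Variable R : realType.

Lemma homotopic_on_precomp (X X' Y : topologicalType) (U : set X)
    (phi : X' -> X) (f g : X -> Y) :
  continuous phi -> homotopic_on R U f g ->
  homotopic_on R (phi @^-1` U) (f \o phi) (g \o phi).
Proof.
move=> cphi [H [cH H0 H1]].
exists (H \o fun p : X' * R => (phi p.1, p.2)); split.
- apply: continuous_within_precomp cH; last by move=> [x t] [/= Ux It].
  apply: continuous_pair; last exact: continuous_snd.
  exact: comp_continuous (@continuous_fst _ _) cphi.
- by move=> x Ux; exact: H0.
- by move=> x Ux; exact: H1.
Qed.

Lemma homotopic_on_postcomp (X Y Z : topologicalType) (U : set X)
    (psi : Y -> Z) (f g : X -> Y) :
  continuous psi -> homotopic_on R U f g ->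
  homotopic_on R U (psi \o f) (psi \o g).
Proof.
move=> cpsi [H [cH H0 H1]]; exists (psi \o H); split.
- exact: continuous_within_postcomp.
- by move=> x Ux /=; rewrite H0.
- by move=> x Ux /=; rewrite H1.
Qed.

Lemma homotopic_on_prod_id (X Y Z : topologicalType) (U : set X) (f g : X -> Y) :
  homotopic_on R U f g ->
  homotopic_on R (@fst X Z @^-1` U)
    (fun p => (f p.1, p.2)) (fun p => (g p.1, p.2)).
Proof.
move=> [H [cH H0 H1]].
exists (fun q : (X * Z) * R => (H (q.1.1, q.2), q.1.2)); split.
- apply: continuous_within_pair.
  + apply: continuous_within_precomp cH; last by move=> [[x z] t] [/= Ux It].
    apply: continuous_pair; last exact: continuous_snd.
    exact: comp_continuous (@continuous_fst _ _) (@continuous_fst _ _).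
  + apply: continuous_subspaceT.
    exact: comp_continuous (@continuous_fst _ _) (@continuous_snd _ _).
- by move=> [x z] /= Ux; rewrite H0.
- by move=> [x z] /= Ux; rewrite H1.
Qed.

Lemma hdist_le_transfer (X X' Y Y' : topologicalType) (phi : X' -> X)
    (f g : X -> Y) (f' g' : X' -> Y') (k : nat) :
  continuous phi ->
  (forall U, homotopic_on R U f g -> homotopic_on R (phi @^-1` U) f' g') ->
  hdist_le R f g k -> hdist_le R f' g' k.
Proof.
move=> cphi hU [U [oU coverU htpU]].
exists (fun j => phi @^-1` U j); split.
- by move=> j jk; exact: (proj1 (continuousP _) cphi _ (oU j jk)).
- apply/seteqP; split => // x _.
  have : [set: X] (phi x) by [].
  by rewrite -coverU => -[j jk Uj]; exists j.
- by move=> j jk; exact/hU/htpU.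
Qed.

Lemma hdist_le_precomp (X X' Y : topologicalType) (phi : X' -> X)
    (f g : X -> Y) (k : nat) :
  continuous phi -> hdist_le R f g k -> hdist_le R (f \o phi) (g \o phi) k.
Proof.
move=> cphi; apply: (hdist_le_transfer cphi) => U htpU.
exact: homotopic_on_precomp.
Qed.

Lemma eq_hdist (X Y X' Y' : topologicalType) (f g : X -> Y) (f' g' : X' -> Y') :
  (forall k, hdist_le R f g k <-> hdist_le R f' g' k) ->
  hdist R f g = hdist R f' g'.
Proof.
move=> fg_f'g'; rewrite /hdist.
case: pselect => [[k hk]|nfg]; case: pselect => [[k' hk']|nf'g'].
- congr Some; case: ex_minnP => m /asboolP Pm minm.
  case: ex_minnP => m' /asboolP Pm' minm'.
  by apply/eqP; rewrite eqn_leq minm ?minm' //; apply/asboolP/fg_f'g'.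
- by exfalso; apply: nf'g'; exists k; exact/fg_f'g'.
- by exfalso; apply: nfg; exists k'; exact/fg_f'g'.
- by [].
Qed.

End Homotopy.

Section TopologicalGroup.
Variables (R : realType) (G : topologicalType).
Variables (mul : G -> G -> G) (inv : G -> G) (one : G).
Hypothesis groupG : topological_group mul inv one.

Lemma hdist_le_mul_div k : hdist_le R (fun x : G => x) inv k ->
  hdist_le R (fun p : G * G => mul p.1 p.2) (fun p : G * G => mul (inv p.1) p.2) k.
Proof.
case: groupG => _ _ _ cmul _.
apply: hdist_le_transfer (@continuous_fst G G) _ => U htpU.
exact: homotopic_on_postcomp cmul (homotopic_on_prod_id G htpU).
Qed.

Lemma hdist_le_id_inv k :
  hdist_le R (fun p : G * G => mul p.1 p.2) (fun p : G * G => mul (inv p.1) p.2) k ->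
  hdist_le R (fun x : G => x) inv k.
Proof.
case: groupG => _ unitG _ _ _.
have mulg1 x : mul x one = x by case: (unitG x).
have cslice : continuous (fun x : G => (x, one)).
  by apply: continuous_pair => [x|]; [exact: cvg_id | exact: cst_continuous].
have mul_slice : (fun p : G * G => mul p.1 p.2) \o (fun x => (x, one)) =
    (fun x => x) by apply/funext => x; exact: mulg1.
have div_slice : (fun p : G * G => mul (inv p.1) p.2) \o (fun x => (x, one)) =
    inv by apply/funext => x; exact: mulg1.
by move=> /(hdist_le_precomp cslice); rewrite mul_slice div_slice.
Qed.

End TopologicalGroup.

Theorem proposition4p3 (R : realType) (n : nat) (G : topologicalType)
    (mul : G -> G -> G) (inv : G -> G) (one : G) :
  topological_group mul inv one ->
  hausdorff_space G ->
  locally_euclidean R n G ->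
  hdist R (fun p : G * G => mul p.1 p.2) (fun p : G * G => mul (inv p.1) p.2)
  = hdist R (fun x : G => x) inv.
Proof.
move=> groupG _ _; apply: eq_hdist => k; split.
- exact/(hdist_le_id_inv groupG).
- exact/(hdist_le_mul_div groupG).
Qed.
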